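(* Let $\Gamma$ be a finite vertex-transitive graph with $\mathrm{diam}(\Gamma)\in\{1,2\}$. Then $\Gamma$ admits no extended irregular dominating set.
   Context: Let $\Gamma=(V,E)$ be a finite simple undirected graph with graph distance $d$; $\mathrm{diam}(\Gamma)$ is the largest distance between two vertices. A vertex $v$ carrying a non-negative integer label $\ell$ dominates (covers) exactly the vertices $u$ with $d(u,v)=\ell$; a vertex labeled $0$ dominates only itself. An extended irregular dominating set is a set $S\subseteq V$ together with a labeling $\lambda:S\to\mathbb{Z}_{\ge 0}$ with distinct labels on distinct vertices, such that every vertex of $V$ is dominated by at least one vertex of $S$; it is assumed that some vertex of $S$ has label $0$. *)

From mathcomp Require Import all_boot all_order all_fingroup.
Set Implicit Arguments. Unset Strict Implicit. Unset Printing Implicit Defensive.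

Definition simple_graph (T : finType) (e : rel T) : Prop :=
  symmetric e /\ irreflexive e.

Fixpoint nstep (T : finType) (e : rel T) (k : nat) (u v : T) : bool :=
  match k with
  | 0 => u == v
  | k'.+1 => [exists w, e u w && nstep e k' w v]
  end.

Definition is_dist (T : finType) (e : rel T) (u v : T) (l : nat) : Prop :=
  nstep e l u v /\ (forall k, k < l -> ~~ nstep e k u v).

Definition diam_eq (T : finType) (e : rel T) (D : nat) : Prop :=
  (forall u v : T, exists2 l, l <= D & is_dist e u v l) /\
  (exists u v : T, is_dist e u v D).

Definition graph_automorphism (T : finType) (e : rel T) (f : {perm T}) : Prop :=
  forall x y, e (f x) (f y) = e x y.

Definition vertex_transitive (T : finType) (e : rel T) : Prop :=
  forall u v : T, exists f : {perm T}, graph_automorphism e f /\ f u = v.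

(* extended irregular dominating set: S with labeling lam (values outside S
   irrelevant), distinct labels on distinct vertices of S, every vertex
   dominated, and some vertex of S labeled 0. *)
Definition ext_irr_dom (T : finType) (e : rel T) (S : {set T}) (lam : T -> nat)
  : Prop :=
  {in S &, injective lam} /\
  (forall u : T, exists2 v, v \in S & is_dist e u v (lam v)) /\
  (exists2 v, v \in S & lam v = 0).

(* Only labels 0, 1 and 2 dominate anything when the diameter is at most 2,
   and the vertex labelled 0 dominates only itself.  So every other vertex is
   dominated by a vertex of label 1 or 2, distinct from it.  Starting from a
   vertex c of label 1 or 2, its dominator w carries the other label, and the
   dominator of w must then be c again; but then d(c, w) = lam w and
   d(w, c) = lam c, so the labels of c and w agree, a contradiction.  Hence
   the graph has a single vertex, which is incompatible with diameter 1 or 2. *)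
From mathcomp Require Import all_boot all_order all_fingroup zify.

Set Implicit Arguments.
Unset Strict Implicit.

Section Distance.
Variables (T : finType) (e : rel T).

Lemma nstepSr k u v : nstep e k.+1 u v = [exists w, nstep e k u w && e w v].
Proof.
elim: k u v => [|k IH] u v.
  apply/existsP/existsP => [[w /andP[euw /eqP <-]]|[w /andP[/eqP <- euv]]].
    by exists u; rewrite /= eqxx.
  by exists v; rewrite /= euv eqxx.
apply/existsP/existsP => [[w /andP[euw nwv]]|[w /andP[/existsP[x /andP[eux nxw]] ewv]]].
  have : nstep e k.+1 w v := nwv; rewrite IH => /existsP[x /andP[nwx exv]].
  by exists x; rewrite exv andbT; apply/existsP; exists w; rewrite euw.
exists x; rewrite eux; change (nstep e k.+1 x v).
by rewrite IH; apply/existsP; exists w; apply/andP.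
Qed.

Lemma nstep_sym : symmetric e -> forall k u v, nstep e k u v = nstep e k v u.
Proof.
move=> e_sym; elim=> [|k IH] u v; first by rewrite /= eq_sym.
by rewrite nstepSr [RHS]/=; apply: eq_existsb => w; rewrite IH e_sym andbC.
Qed.

Lemma is_dist_sym u v l : symmetric e -> is_dist e u v l -> is_dist e v u l.
Proof.
move=> e_sym [nuv min_l]; split=> [|k lt_kl]; first by rewrite nstep_sym.
by rewrite nstep_sym //; apply: min_l.
Qed.

Lemma is_dist_uniq u v l1 l2 : is_dist e u v l1 -> is_dist e u v l2 -> l1 = l2.
Proof.
move=> [n1 m1] [n2 m2]; case: (ltngtP l1 l2) => // lt_l.
  by move: (m2 _ lt_l); rewrite n1.
by move: (m1 _ lt_l); rewrite n2.
Qed.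

Lemma is_dist0_eq u v : is_dist e u v 0 -> u = v.
Proof. by case=> /= /eqP. Qed.

Lemma is_distuu u l : is_dist e u u l -> l = 0.
Proof. by move/is_dist_uniq; apply; split=> //=; rewrite eqxx. Qed.

Lemma diam_eq_dist_le D u v l : diam_eq e D -> is_dist e u v l -> l <= D.
Proof.
by move=> [all_le _] duv; have [l' le_l'D /(is_dist_uniq duv) ->] := all_le u v.
Qed.

Lemma diam_eq_nontrivial D : 0 < D -> diam_eq e D -> exists a b : T, a != b.
Proof.
move=> D_gt0 [_ [a [b dab]]]; exists a, b; apply/eqP => eq_ab.
by move: dab; rewrite eq_ab => /is_distuu D0; rewrite D0 in D_gt0.
Qed.

End Distance.

Section DiameterAtMostTwo.
Variables (T : finType) (e : rel T).
Hypothesis e_sym : symmetric e.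
Hypothesis dist_le2 : forall u v l, is_dist e u v l -> l <= 2.

Variables (S : {set T}) (lam : T -> nat) (v0 : T).
Hypothesis lam_inj : {in S &, injective lam}.
Hypothesis dominated : forall u, exists2 w, w \in S & is_dist e u w (lam w).
Hypotheses (v0S : v0 \in S) (lam_v0 : lam v0 = 0).

Lemma dominator_label12 u :
  u != v0 -> exists2 w, w \in S & [/\ is_dist e u w (lam w), w != u & 0 < lam w <= 2].
Proof.
move=> u_neq_v0; have [w wS duw] := dominated u; exists w => //.
have w_neq_u : w != u.
  apply: contra u_neq_v0 => /eqP eq_wu; move: duw; rewrite -eq_wu => /is_distuu lw0.
  by apply/eqP; apply: lam_inj; rewrite ?lw0 ?lam_v0.
split=> //; rewrite (dist_le2 duw) andbT lt0n.
by apply: contra w_neq_u => /eqP lw0; move: duw; rewrite lw0 => /is_dist0_eq ->.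
Qed.

Lemma eq_label0_vertex u : u = v0.
Proof.
have [// | /dominator_label12[c cS [_ _ lc12]]] := eqVneq u v0.
have c_neq_v0 : c != v0 by apply: contraTneq lc12 => ->; rewrite lam_v0.
have [w wS [dcw w_neq_c lw12]] := dominator_label12 c_neq_v0.
have w_neq_v0 : w != v0 by apply: contraTneq lw12 => ->; rewrite lam_v0.
have [c' c'S [dwc' c'_neq_w lc'12]] := dominator_label12 w_neq_v0.
have label_neq x y : x \in S -> y \in S -> y != x -> lam y != lam x.
  by move=> xS yS; apply: contra => /eqP /(lam_inj yS xS) ->.
have lcw := label_neq _ _ cS wS w_neq_c.
have eq_c' : c' = c.
  by apply: lam_inj => //; move: (label_neq _ _ wS c'S c'_neq_w); lia.
move: dwc'; rewrite eq_c' => /(is_dist_sym e_sym) /(is_dist_uniq dcw) eq_lwc.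
by rewrite eq_lwc eqxx in lcw.
Qed.

End DiameterAtMostTwo.

Theorem proposition3p1 (T : finType) (e : rel T) :
  simple_graph e -> vertex_transitive e ->
  (diam_eq e 1 \/ diam_eq e 2) ->
  ~ (exists (S : {set T}) (lam : T -> nat), ext_irr_dom e S lam).
Proof.
move=> [e_sym _] _ diam12 [S [lam [lam_inj [dominated [v0 v0S lam_v0]]]]].
have [D /andP[D_gt0 D_le2] diamD] : exists2 D, 0 < D <= 2 & diam_eq e D.
  by case: diam12; [exists 1 | exists 2].
have dist_le2 u v l : is_dist e u v l -> l <= 2.
  by move/(diam_eq_dist_le diamD)/leq_trans; apply.
have [a [b /eqP[]]] := diam_eq_nontrivial D_gt0 diamD.
have eq_v0 := eq_label0_vertex e_sym dist_le2 lam_inj dominated v0S lam_v0.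
by rewrite (eq_v0 a) (eq_v0 b).
Qed.
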